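(* Let $G$ be a group acting as a convergence group on a compact Hausdorff space $X$ with at least $3$ points. Then $(X,G)$ is null.
   Context: A net $\{s_i\}_{i\in I}$ in $G$ is wandering if for every $s\in G$, $s_i\neq s$ for all sufficiently large $i$. $G$ acts as a (discrete) convergence group on $X$ if the action is by homeomorphisms and for every wandering net $\{s_i\}$ in $G$ there exist $x,y\in X$ and a subnet $\{s_j\}_{j\in J}$ such that $s_jK\to y$ as $j\to\infty$ for every compact $K\subseteq X\setminus\{x\}$. For a sequence $\mathfrak s=\{s_n\}$ in $G$ and a finite open cover ${\mathcal U}$ of $X$, ${\rm h}_{\rm top}(X,{\mathcal U};\mathfrak s)=\limsup_{n\to\infty}\frac1n\log N(\bigvee_{i=1}^ns_i^{-1}{\mathcal U})$, with $N(\cdot)$ the minimal cardinality of a subcover. $(X,G)$ is null if ${\rm h}_{\rm top}(X,{\mathcal U};\mathfrak s)=0$ for all finite open covers ${\mathcal U}$ and all sequences $\mathfrak s$ in $G$. *)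

From HB Require Import structures.
From mathcomp Require Import all_boot all_order all_algebra.
From mathcomp Require Import monoid.
From Stdlib Require List.
From mathcomp Require Import all_classical all_reals all_analysis.

Set Implicit Arguments.
Unset Strict Implicit.
Unset Printing Implicit Defensive.

Import Order.TTheory GRing.Theory Num.Theory.
Local Open Scope classical_set_scope.
Local Open Scope ring_scope.

(* [act] is an action of the (discrete, abstract) group G on X by
   homeomorphisms: each [act g] is continuous, and the action laws hold
   (so [act g^-1] is a continuous inverse of [act g]). *)
Definition action_by_homeo (G : groupType) (X : topologicalType)
  (act : G -> X -> X) : Prop :=
  [/\ (forall x, act (@monoid.one G) x = x),
      (forall g h x, act (@monoid.mul G g h) x = act g (act h x)) &
      (forall g, continuous (act g))].

Definition directed (I : Type) (le : I -> I -> Prop) : Prop :=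
  [/\ (exists i : I, True),
      (forall i, le i i),
      (forall i j k, le i j -> le j k -> le i k) &
      (forall i j, exists k, le i k /\ le j k)].

Definition eventually_net (I : Type) (le : I -> I -> Prop) (P : I -> Prop) : Prop :=
  exists i0, forall i, le i0 i -> P i.

Definition wandering (G : Type) (I : Type) (le : I -> I -> Prop) (s : I -> G) : Prop :=
  forall s0 : G, eventually_net le (fun i => s i <> s0).

Definition subnet_map (I J : Type) (leI : I -> I -> Prop) (leJ : J -> J -> Prop)
  (phi : J -> I) : Prop :=
  forall i, eventually_net leJ (fun j => leI i (phi j)).

Definition convergence_action (G : groupType) (X : topologicalType)
  (act : G -> X -> X) : Prop :=
  action_by_homeo act /\
  forall (I : Type) (leI : I -> I -> Prop) (s : I -> G),
    directed leI -> wandering leI s ->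
    exists (x y : X) (J : Type) (leJ : J -> J -> Prop) (phi : J -> I),
      [/\ directed leJ, subnet_map leI leJ phi &
        forall K : set X, compact K -> K `<=` ~` [set x] ->
          forall U : set X, nbhs y U ->
            eventually_net leJ (fun j => act (s (phi j)) @` K `<=` U)].

Definition finite_open_cover (X : topologicalType) (U : seq (set X)) : Prop :=
  (forall A, List.In A U -> open A) /\ \bigcup_(A in [set A | List.In A U]) A = setT.

Definition has_subcover_of_size (X : Type) (V : seq (set X)) (n : nat) : Prop :=
  exists W : seq (set X), [/\ size W = n,
    (forall A, List.In A W -> List.In A V) &
    \bigcup_(A in [set A | List.In A W]) A = setT].

(* N(V): minimal cardinality of a subcover of V (0 if V is not a cover) *)
Definition Ncov (X : Type) (V : seq (set X)) : nat :=
  match pselect (exists n, asbool (has_subcover_of_size V n)) with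
  | left h => ex_minn h
  | right _ => 0%N
  end.

Definition cover_pullback (G : Type) (X : Type) (act : G -> X -> X)
  (g : G) (U : seq (set X)) : seq (set X) :=
  [seq act g @^-1` A | A <- U].

Definition cover_join (X : Type) (Us : seq (seq (set X))) : seq (set X) :=
  foldr (fun U acc => [seq A `&` B | A <- U, B <- acc]) [:: setT] Us.

Definition htop_seq (R : realType) (G : Type) (X : Type) (act : G -> X -> X)
  (U : seq (set X)) (s : nat -> G) : \bar R :=
  limn_esup (fun n : nat =>
    ((ln ((Ncov (cover_join [seq cover_pullback act (s i) U | i <- iota 1 n]))%:R : R))
      / n%:R)%:E).

Definition null_system (R : realType) (G : Type) (X : topologicalType)
  (act : G -> X -> X) : Prop :=
  forall (U : seq (set X)) (s : nat -> G),
    finite_open_cover U -> htop_seq R act U s = 0%E.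

(* Shrink the open cover U to closed sets c A <= A (A in U) that still cover X
   and view each pair (g, A) as a test with the disjoint closed sides
   g^-1 (X \ A) and g^-1 (c A).  Two tests are independent when all four
   intersections of their sides are nonempty.  If (g, A) and (h, B) are
   independent, then h / g maps points of each side of A into each side of B,
   and the convergence property allows only finitely many such elements; so
   each test is independent of at most Delta = |E| |U| tests, for a finite E.
   In a binary tree splitting X by tests from a family W, the numbers c0, c1 of
   tests still splitting the two children of a node split by c tests satisfy
   c0 + c1 < c + Delta, whence 2 ^ d <= 2 ^ (Delta + 1) (c - Delta) once d >
   Delta: such trees have depth below Delta + 2 + log2 |W|.  Without a splitting
   tree of depth d, X is covered by (|W| + 1) ^ d sign-pattern cells, each
   inside a member of the join of the g^-1 U.  For W = {s_1, ..., s_n} x U this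
   gives N <= (|U| n + 1) ^ O(log n), so (log N) / n tends to 0. *)

From HB Require Import structures.
From mathcomp Require Import all_boot all_order all_algebra.
From mathcomp Require Import monoid.
From mathcomp Require Import all_classical all_reals all_analysis.
From mathcomp Require Import zify.
From Stdlib Require List.

Set Implicit Arguments.
Unset Strict Implicit.
Unset Printing Implicit Defensive.

Import Order.TTheory GRing.Theory Num.Theory.
Local Open Scope classical_set_scope.

Lemma InP (A : eqType) (x : A) (s : seq A) : reflect (List.In x s) (x \in s).
Proof.
apply: (iffP idP); elim: s => //= y s IH; rewrite in_cons.
  by case/orP => [/eqP ->|/IH]; [left|right].
by case=> [->|/IH ->]; rewrite ?eqxx ?orbT.
Qed.

Lemma In_allpairs (S1 S2 T : Type) (f : S1 -> S2 -> T) s1 s2 x y :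
  List.In x s1 -> List.In y s2 -> List.In (f x y) [seq f x y | x <- s1, y <- s2].
Proof.
elim: s1 => //= a s1 IH [<-|xs1] ys2; apply/List.in_app_iff; last by right; exact: IH.
by left; exact: (List.in_map _ _ _ ys2).
Qed.

Lemma count_lt_sub (A : eqType) (p q : pred A) (s : seq A) (i : A) :
  subpred p q -> i \in s -> q i -> ~~ p i -> (count p s < count q s)%N.
Proof.
move=> pq + qi npi; elim: s => //= j s IH; rewrite in_cons => /orP[/eqP <-|/IH].
  by rewrite qi (negPf npi) add0n add1n ltnS sub_count.
have pjqj : (p j <= q j)%N by case: (boolP (p j)) => // /pq ->.
by rewrite -addnS; apply: leq_add.
Qed.

Section SplittingTrees.
Variables (T : Type) (I : eqType) (P : I -> bool -> set T).
Hypothesis P_disjoint : forall i, P i false `<=` ~` P i true.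

Lemma P_exclusive i c z : P i c z -> ~ P i (~~ c) z.
Proof. by case: c => Pz Pz'; [exact: P_disjoint Pz' Pz|exact: P_disjoint Pz Pz']. Qed.

Fixpoint split_tree (W : seq I) (Z : set T) (d : nat) : Prop :=
  if d is d'.+1 then exists2 i, i \in W &
    split_tree W (Z `&` P i false) d' /\ split_tree W (Z `&` P i true) d'
  else Z !=set0.

Lemma split_tree_sub W W' Z Z' d : {subset W <= W'} -> Z `<=` Z' ->
  split_tree W Z d -> split_tree W' Z' d.
Proof.
move=> sWW'; elim: d Z Z' => [|d IH] Z Z' sZZ' /=; first by case=> z /sZZ'; exists z.
case=> i iW [t0 t1]; exists i; first exact: sWW'.
by split; [apply: IH t0|apply: IH t1]; apply: setSI.
Qed.

Lemma split_tree_nonempty W Z d : split_tree W Z d -> Z !=set0.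
Proof. by elim: d Z => [|d IH] Z //= [i _ [/IH [z [Zz _]] _]]; exists z. Qed.

Definition pattern_cell (W : seq I) (sg : I -> bool) : set T :=
  [set z | forall i, i \in W -> ~ P i (sg i) z].

Let with_sign (sg : I -> bool) i b : I -> bool := @dfwith _ (fun=> bool) sg i b.

(* If Z has no split tree of depth d + 1, one side of the first test i has none
   of depth d; its points get the opposite sign at i, and the points off that
   side are covered using the remaining tests only. *)
Lemma pattern_cover_of_no_split_tree W Z d : ~ split_tree W Z d ->
  exists2 L : seq (I -> bool), (size L <= (size W).+1 ^ d)%N &
    forall z, Z z -> exists2 sg, List.In sg L & pattern_cell W sg z.
Proof.
elim: W Z d => [|i W IH] Z [|d] noZ;
  try by exists [::] => // z Zz; case: noZ; exists z.
  exists [:: fun=> false]; first by rewrite exp1n.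
  by move=> z _; exists (fun=> false); first left.
have [c noZc] : exists c, ~ split_tree (i :: W) (Z `&` P i c) d.
  case: (pselect (split_tree (i :: W) (Z `&` P i false) d)) => [t0|]; last first.
    by exists false.
  by exists true => t1; apply: noZ; exists i; rewrite ?mem_head.
have sWiW : {subset W <= i :: W} by move=> j jW; rewrite in_cons jW orbT.
have [L1 sizeL1 coverL1] := IH (Z `&` P i c) d
  (fun t => noZc (split_tree_sub sWiW (@subset_refl _ _) t)).
have [L2 sizeL2 coverL2] := IH (Z `&` ~` P i c) d.+1
  (fun t => noZ (split_tree_sub sWiW (@subIsetl _ _ _) t)).
exists ([seq with_sign sg i (~~ c) | sg <- L1] ++ [seq with_sign sg i c | sg <- L2]).
  rewrite size_cat !size_map /=.
  apply: leq_trans (leq_add sizeL1 sizeL2) _.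
  rewrite [_ ^ d.+1]expnS -[X in (X + _ <= _)%N]mul1n -mulnDl add1n expnS.
  by case: (d) => [|d']; rewrite leq_mul2l ?expn0 ?leq_exp2r ?leqnSn ?orbT.
move=> z Zz; have [Pz|nPz] := pselect (P i c z).
- have [sg Lsg cell] := coverL1 z (conj Zz Pz).
  exists (with_sign sg i (~~ c)).
    by apply/List.in_app_iff; left; exact: (List.in_map _ _ _ Lsg).
  move=> j; rewrite /with_sign; case: dfwithP => [_|k ik]; first exact: P_exclusive.
  by rewrite in_cons eq_sym (negPf ik); exact: cell.
- have [sg Lsg cell] := coverL2 z (conj Zz nPz).
  exists (with_sign sg i c).
    by apply/List.in_app_iff; right; exact: (List.in_map _ _ _ Lsg).
  move=> j; rewrite /with_sign; case: dfwithP => [_ //|k ik].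
  by rewrite in_cons eq_sym (negPf ik); exact: cell.
Qed.

Definition splits (Z : set T) : pred I :=
  fun j => `[< (Z `&` P j false) !=set0 /\ (Z `&` P j true) !=set0 >].

Definition nsplits (W : seq I) (Z : set T) : nat := count (splits Z) W.

Lemma splits_of_split_tree W Z i d :
  split_tree W (Z `&` P i false) d -> split_tree W (Z `&` P i true) d -> splits Z i.
Proof. by move=> /split_tree_nonempty Z0 /split_tree_nonempty Z1; apply/asboolP. Qed.

Lemma count_splits_children_lt W Z i : i \in W -> splits Z i ->
  (count (predU (splits (Z `&` P i false)) (splits (Z `&` P i true))) W < nsplits W Z)%N.
Proof.
move=> iW Zi; apply: count_lt_sub iW Zi _ => [j|].
  by case/orP=> /asboolP[[z [[Zz _] Pz]] [z' [[Zz' _] Pz']]];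
    apply/asboolP; split; [exists z|exists z'|exists z|exists z'].
by apply/orP=> -[] /asboolP[[z [[_ Pz] Pz']] [z' [[_ Pt] Pt']]];
  [exact: P_disjoint Pt Pt'|exact: P_disjoint Pz' Pz].
Qed.

Variables (nbr : I -> seq I) (Delta : nat).
Hypothesis nbr_size : forall i, (size (nbr i) <= Delta)%N.
Hypothesis nbr_independent : forall i j,
  (forall a b, (P i a `&` P j b) !=set0) -> j \in nbr i.

Lemma count_splits_both_le W Z i : uniq W ->
  (count (predI (splits (Z `&` P i false)) (splits (Z `&` P i true))) W <= Delta)%N.
Proof.
move=> uW; apply: leq_trans (nbr_size i); rewrite -size_filter.
apply: uniq_leq_size; first exact: filter_uniq.
move=> j; rewrite mem_filter => /andP[/andP[/asboolP S0 /asboolP S1] _].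
case: S0 S1 => [[z0 [[_ ?] ?]] [z1 [[_ ?] ?]]] [[z2 [[_ ?] ?]] [z3 [[_ ?] ?]]].
by apply: nbr_independent => -[] [];
  [exists z3|exists z2|exists z1|exists z0].
Qed.

Lemma nsplits_children W Z i : uniq W -> i \in W -> splits Z i ->
  (nsplits W (Z `&` P i false) + nsplits W (Z `&` P i true) < nsplits W Z + Delta)%N.
Proof.
move=> uW iW Zi; rewrite /nsplits -count_predUI.
by apply: leq_add (count_splits_children_lt iW Zi) (count_splits_both_le _ _ uW).
Qed.

Lemma nsplits_child_lt W Z i b : i \in W -> splits Z i ->
  (nsplits W (Z `&` P i b) < nsplits W Z)%N.
Proof.
move=> iW Zi; apply: leq_ltn_trans (count_splits_children_lt iW Zi).
by apply: sub_count => j; case: b => Sj; rewrite /= Sj ?orbT.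
Qed.

Lemma split_tree_depth_le W Z d : split_tree W Z d -> (d <= nsplits W Z)%N.
Proof.
elim: d Z => // d IH Z [i iW [t0 t1]].
exact: leq_ltn_trans (IH _ t0) (nsplits_child_lt _ iW (splits_of_split_tree t0 t1)).
Qed.

Lemma split_tree_exp_bound W Z d : uniq W -> split_tree W Z d -> (Delta < d)%N ->
  (2 ^ d <= 2 ^ Delta.+1 * (nsplits W Z - Delta))%N.
Proof.
move=> uW; elim: d Z => // d IH Z tZ; have := split_tree_depth_le tZ.
case: tZ => i iW [t0 t1] dZ; rewrite ltnS leq_eqVlt => /orP[/eqP Dd|Dd].
  by rewrite -Dd -[X in (X <= _)%N]muln1 leq_mul2l subn_gt0 Dd dZ orbT.
have children := nsplits_children uW iW (splits_of_split_tree t0 t1).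
have d0 := split_tree_depth_le t0; have d1 := split_tree_depth_le t1.
have e0 := IH _ t0 Dd; have e1 := IH _ t1 Dd.
rewrite [2 ^ d.+1]expnS mul2n -addnn; apply: leq_trans (leq_add e0 e1) _.
by rewrite -mulnDr leq_mul2l; apply/orP; right; lia.
Qed.

Lemma no_deep_split_tree W Z : uniq W ->
  ~ split_tree W Z (Delta.+1 + (trunc_log 2 (size W)).+1).
Proof.
move=> uW tZ; have := split_tree_exp_bound uW tZ (ltn_addr _ (ltnSn _)).
rewrite expnD leq_pmul2l ?expn_gt0 // => big.
have := trunc_log_ltn (size W) (isT : (1 < 2)%N).
have : (nsplits W Z <= size W)%N by exact: count_size.
lia.
Qed.
End SplittingTrees.

Section Covers.
Variable T : Type.

Lemma cover_join_refines (Us : seq (seq (set T))) (Y : set T) :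
  (forall U, List.In U Us -> exists2 A, List.In A U & Y `<=` A) ->
  exists2 B, List.In B (cover_join Us) & Y `<=` B.
Proof.
elim: Us => [|U Us IH] YUs; first by exists setT; [left|].
have [A AU YA] := YUs U (or_introl erefl).
have [B BJ YB] := IH (fun V VUs => YUs V (or_intror VUs)).
exists (A `&` B); first exact: (In_allpairs (@setI T) AU BJ).
by move=> z Yz; split; [exact: YA|exact: YB].
Qed.

Lemma has_subcover_of_refinement (V Ys : seq (set T)) :
  (forall x, exists2 Y, List.In Y Ys & Y x) ->
  (forall Y, List.In Y Ys -> exists2 B, List.In B V & Y `<=` B) ->
  has_subcover_of_size V (size Ys).
Proof.
move=> cover refine.
have [W [sizeW WV YW]] : exists W : seq (set T), [/\ size W = size Ys,
    forall B, List.In B W -> List.In B V &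
    forall Y, List.In Y Ys -> exists2 B, List.In B W & Y `<=` B].
  elim: Ys {cover} refine => [|Y Ys IH] refine; first by exists [::].
  have [B BV YB] := refine Y (or_introl erefl).
  have [W [sizeW WV YW]] := IH (fun Z Zs => refine Z (or_intror Zs)).
  exists (B :: W); split => /=; first by rewrite sizeW.
  - by move=> B' [<-|/WV].
  - by move=> Z [<-|/YW [B' B'W ZB']]; [exists B; [left|]|exists B'; [right|]].
exists W; split => //; apply/seteqP; split => // x _.
have [Y YYs Yx] := cover x; have [B BW YB] := YW Y YYs.
by exists B => //; exact: YB.
Qed.

Lemma Ncov_le (V : seq (set T)) n : has_subcover_of_size V n -> (Ncov V <= n)%N.
Proof.
move=> Vn; rewrite /Ncov; case: pselect => [h|]; last by [].
by case: ex_minnP => m _; apply; apply/asboolP.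
Qed.

Lemma Ncov_gt0 (V : seq (set T)) n : [set: T] !=set0 ->
  has_subcover_of_size V n -> (0 < Ncov V)%N.
Proof.
move=> [x _] Vn; rewrite /Ncov; case: pselect => [h|]; last first.
  by case; exists n; apply/asboolP.
case: ex_minnP => -[|//] /asboolP[W [/size0nil -> _ cover]] _.
by have : [set: T] x by []; rewrite -cover => -[].
Qed.
End Covers.

Section LogBounds.
Variable R : realType.
Local Open Scope ring_scope.

Lemma ln_le_2sqrt (y : R) : 0 < y -> ln y <= 2 * Num.sqrt y.
Proof.
move=> y0; have s0 : 0 < Num.sqrt y by rewrite sqrtr_gt0.
rewrite -{1}(sqr_sqrtr (ltW y0)) lnXn // -[ln _ *+ 2]mulr_natl ler_wpM2l //.
exact/ltW/ln_sublinear.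
Qed.

Lemma ln_sqr_le (y : R) : 1 <= y -> ln y ^+ 2 <= 16 * Num.sqrt y.
Proof.
move=> y1; have y0 : 0 < y := lt_le_trans ltr01 y1.
have s0 : 0 < Num.sqrt y by rewrite sqrtr_gt0.
have ln_le : ln y <= 4 * Num.sqrt (Num.sqrt y).
  rewrite -{1}(sqr_sqrtr (ltW y0)) lnXn // -[ln _ *+ 2]mulr_natl.
  apply: le_trans (ler_wpM2l _ (ln_le_2sqrt s0)) _ => //.
  by rewrite mulrA -natrM.
rewrite expr2; apply: le_trans (ler_pM (ln_ge0 y1) (ln_ge0 y1) ln_le ln_le) _.
by rewrite mulrACA -natrM -expr2 sqr_sqrtr ?sqrtr_ge0.
Qed.

Lemma ln_le_of_pow_bound (c t N y : nat) : (0 < N)%N ->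
  (N <= y ^ (c + t))%N -> (2 ^ t <= y)%N ->
  ln (N%:R : R) <= (2 * c%:R + 16 / ln 2) * Num.sqrt y%:R.
Proof.
move=> N0 Ny ty; have y1 : (1 <= y)%N := leq_trans (expn_gt0 2 t) ty.
have ln2 : 0 < ln (2 : R) by rewrite ln_gt0 // ltr1n.
set Y : R := y%:R; have Y1 : 1 <= Y by rewrite ler1n.
have Y0 : 0 < Y := lt_le_trans ltr01 Y1.
have lnN : ln (N%:R : R) <= c%:R * ln Y + t%:R * ln Y.
  rewrite -mulrDl -natrD mulr_natl -lnXn // ler_ln ?posrE ?ltr0n ?exprn_gt0 //.
  by rewrite /Y -natrX ler_nat.
have tY : t%:R <= ln Y / ln 2.
  rewrite ler_pdivlMr // mulr_natl -lnXn // ler_ln ?posrE ?exprn_gt0 //.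
  by rewrite /Y -natrX ler_nat.
apply: (le_trans lnN); rewrite mulrDl; apply: lerD.
  apply: le_trans (ler_wpM2l (ler0n _ c) (ln_le_2sqrt Y0)) _.
  by rewrite mulrA [c%:R * 2]mulrC.
apply: le_trans (ler_wpM2r (ln_ge0 Y1) tY) _.
by rewrite mulrAC [16 / _ * _]mulrAC -expr2 ler_wpM2r ?ln_sqr_le // invr_ge0 ltW.
Qed.

Lemma cvg_div_of_sqrt_bound (K : R) (a : nat) (u : nat -> R) :
  (forall n, 0 <= u n <= K * Num.sqrt (a * n).+1%:R) ->
  (fun n => u n / n%:R) @ \oo --> 0.
Proof.
move=> uK; have K0 : 0 <= K.
  by have /andP[u0 +] := uK 0%N; rewrite muln0 sqrtr1 mulr1; exact: le_trans.
apply/cvgrPdist_le => e e0; near=> n.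
have n1 : (1 <= n)%N by near: n; exact: nbhs_infty_ge.
have n_large : K ^+ 2 * a.+1%:R / e ^+ 2 <= n%:R by near: n; exact: nbhs_infty_ger.
have n0 : 0 < n%:R :> R by rewrite ltr0n.
have /andP[u0 un] := uK n.
rewrite sub0r normrN ger0_norm ?divr_ge0 // ler_pdivrMr //.
apply: le_trans un _.
rewrite -(ler_pXn2r (isT : (0 < 2)%N)) ?nnegrE;
  last 2 first; [exact: mulr_ge0 K0 (sqrtr_ge0 _)|exact: mulr_ge0 (ltW e0) (ltW n0)|].
rewrite !exprMn sqr_sqrtr ?ler0n //.
apply: (@le_trans _ _ (K ^+ 2 * (a.+1%:R * n%:R))).
  by rewrite ler_wpM2l ?exprn_ge0 // -natrM ler_nat mulSn -addn1 addnC leq_add2r.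
rewrite mulrA [n%:R ^+ 2]expr2 mulrA ler_wpM2r ?(ltW n0) //.
by move: n_large; rewrite ler_pdivrMr ?exprn_gt0 // mulrC [n%:R * _]mulrC.
Unshelve. all: by end_near.
Qed.

Lemma limn_esup_ln_div_eq0 (a c : nat) (N t : nat -> nat) :
  (forall n, 0 < N n)%N -> (forall n, N n <= (a * n).+1 ^ (c + t n))%N ->
  (forall n, 2 ^ t n <= (a * n).+1)%N ->
  limn_esup (fun n => ((ln (N n)%:R : R) / n%:R)%:E) = 0%E.
Proof.
move=> N0 Nbound tbound.
have cvg0 : (ln (N n)%:R / n%:R : R) @[n --> \oo] --> 0.
  apply: (@cvg_div_of_sqrt_bound (2 * c%:R + 16 / ln 2) a) => n.
  by rewrite ln_ge0 ?ler1n ?(ln_le_of_pow_bound _ (Nbound n) (tbound n)).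
have cvgE : (ln (N n)%:R / n%:R : R)%:E @[n --> \oo] --> 0%E.
  by apply: cvg_EFin => //; near=> n.
rewrite is_cvg_limn_esupE; last by apply/cvg_ex; exists 0%E.
exact: cvg_lim cvgE.
Unshelve. all: by end_near.
Qed.
End LogBounds.

Definition seq_incl (T : eqType) (L L' : seq T) : Prop := {subset L <= L'}.

Lemma seq_incl_directed (T : eqType) : directed (@seq_incl T).
Proof.
split=> [|L|L1 L2 L3 h12 h23 z /h12 /h23 //|L1 L2]; first by exists [::].
- by [].
- by exists (L1 ++ L2); split=> z zL; rewrite mem_cat zL ?orbT.
Qed.

Lemma infinite_set_wandering (T : eqType) (S : set T) : infinite_set S ->
  exists2 s : seq T -> T, forall L, S (s L) & wandering (@seq_incl T) s.
Proof.
move=> infS; have /choice[s sP] : forall L : seq T, exists e, S e /\ e \notin L.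
  move=> L; apply: contrapT => noe; apply: infS.
  apply: (@sub_finite_set _ _ [set` L]) => // e Se.
  by apply: contrapT => /negP eL; apply: noe; exists e.
exists s => [L|e]; first exact: (sP L).1.
by exists [:: e] => L eL sLe; have := (sP L).2; rewrite sLe eL ?mem_head.
Qed.

Section CompactSpace.
Variable X : topologicalType.
Hypotheses (X_hausdorff : hausdorff_space X) (X_compact : compact [set: X]).

(* The extra open set O makes the induction on U go through. *)
Lemma closed_shrinking (U : seq (set X)) (O : set X) : open O ->
  (forall A, List.In A U -> open A) ->
  O `|` \bigcup_(A in [set A | List.In A U]) A = setT ->
  exists c : set X -> set X, [/\ forall A, closed (c A) /\ c A `<=` A,
    forall A, ~ List.In A U -> c A = set0 &
    O `|` \bigcup_(A in [set A | List.In A U]) c A = setT].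
Proof.
elim: U O => [|u U IH] O oO oU cover.
  exists (fun=> set0); split => // [A|]; first by split; [exact: closed0|].
  apply/seteqP; split => // x _; have : [set: X] x by [].
  by rewrite -cover => -[|[]]; left.
pose B := O `|` \bigcup_(A in [set A | List.In A U]) A.
have oB : open B by apply: openU => //; apply: bigcup_open => A AU; apply: oU; right.
have notB_u : ~` B `<=` u.
  move=> x nBx; have : [set: X] x by [].
  rewrite -cover => -[Ox|[A /= [<-|AU] Ax]] //; case: nBx; first by left.
  by right; exists A.
have u_nbhs : set_nbhs (~` B) u by apply/set_nbhsP; exists u; split => //; apply: oU; left.
have [V /set_nbhsP[W [oW notB_W WV]] clVu] :=
  compact_normal X_hausdorff X_compact (open_closedC oB) u_nbhs.
have [|A AU||c' [closed_c' support_c' cover_c']] := IH (O `|` W).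
- exact: openU.
- by apply: oU; right.
- apply/seteqP; split => // x _; case: (pselect (B x)) => [[Ox|UAx]|/notB_W Wx].
  + by left; left.
  + by right.
  + by left; right.
exists (fun A => if A == u then closure V `|` c' A else c' A); split.
- move=> A; case: eqP => [->|_]; last exact: closed_c'.
  split; first by apply: closedU; [exact: closed_closure|exact: (closed_c' u).1].
  by rewrite subUset; split => //; exact: (closed_c' u).2.
- move=> A /= notA; have /eqP/negbTE -> : A <> u by move=> Au; apply: notA; left.
  by apply: support_c' => AU; apply: notA; right.
- apply/seteqP; split => // x _; have : [set: X] x by [].
  rewrite -cover_c' => -[[Ox|Wx]|[A AU c'Ax]]; first by left.
    by right; exists u; [left|rewrite eqxx; left; apply/subset_closure/WV].
  by right; exists A; [right|case: eqP => _; [right|]].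
Qed.

Definition crosses (G : groupType) (act : G -> X -> X) (A B : bool -> set X) (e : G) :=
  forall a b, (A a `&` act e @^-1` B b) !=set0.

Lemma convergence_crosses_finite (G : groupType) (act : G -> X -> X)
    (A B : bool -> set X) :
  convergence_action act -> (forall a, closed (A a)) -> (forall b, closed (B b)) ->
  A false `<=` ~` A true -> B false `<=` ~` B true -> finite_set (crosses act A B).
Proof.
move=> [_ act_conv] closedA closedB disjA disjB; apply: contrapT.
move=> /infinite_set_wandering[s s_cross s_wandering].
have [x [y [J [leJ [phi [[_ leJ_refl _ _] _ attract]]]]]] :=
  act_conv _ _ s (@seq_incl_directed G) s_wandering.
have avoid (D : bool -> set X) z : D false `<=` ~` D true -> exists c, ~ D c z.
  by move=> disjD; case: (pselect (D false z)) => [/disjD|]; [exists true|exists false].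
have [a Aax] := avoid A x disjA; have [b Bby] := avoid B y disjB.
have Aa_compact : compact (A a) := subclosed_compact (closedA a) X_compact (subsetT _).
have Aa_sub : A a `<=` ~` [set x] by move=> z Az zx; apply: Aax; rewrite -zx.
have notBb_nbhs : nbhs y (~` B b).
  by apply: open_nbhs_nbhs; split => //; exact: closed_openC.
have [j0 j0_attract] := attract _ Aa_compact Aa_sub _ notBb_nbhs.
have [w [Aw Bw]] := s_cross (phi j0) a b.
exact: j0_attract j0 (leJ_refl j0) (act (s (phi j0)) w) (ex_intro2 _ _ w Aw erefl) Bw.
Qed.
End CompactSpace.

Section ConvergenceAction.
Local Open Scope group_scope.
Variables (G : groupType) (X : topologicalType) (act : G -> X -> X).
Hypotheses (X_compact : compact [set: X]) (act_conv : convergence_action act).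
Variables (U : seq (set X)) (c : set X -> set X).
Hypotheses (U_open : forall A, List.In A U -> open A)
  (c_closed_sub : forall A, closed (c A) /\ c A `<=` A)
  (c_support : forall A, ~ List.In A U -> c A = set0)
  (c_cover : \bigcup_(A in [set A | List.In A U]) c A = setT).

Let act_mul g h x : act (g * h) x = act g (act h x).
Proof. by case: act_conv => -[]. Qed.

Definition side (A : set X) (b : bool) : set X := if b then c A else ~` A.

Lemma side_disjoint A : side A false `<=` ~` side A true.
Proof. by move=> x nAx cAx; apply/nAx/(c_closed_sub A).2. Qed.

Lemma side_closed A b : List.In A U -> closed (side A b).
Proof. by case: b => AU; [exact: (c_closed_sub A).1|exact/open_closedC/U_open]. Qed.

Lemma side_true_In A x : side A true x -> List.In A U.
Proof. by move=> cAx; apply: contrapT => /c_support cA0; rewrite /side cA0 in cAx. Qed.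

Definition crossing_elements : set G :=
  \bigcup_(A in [set A | List.In A U]) \bigcup_(B in [set B | List.In B U])
    crosses act (side A) (side B).

Lemma crossing_elements_finite : finite_set crossing_elements.
Proof.
have finU : finite_set [set A | List.In A U].
  by apply/finite_seqP; exists U; apply/seteqP; split => A /InP.
apply: bigcup_finite => // A AU; apply: bigcup_finite => // B BU.
by apply: convergence_crosses_finite => // [a|b||];
  first [exact: side_closed | exact: side_disjoint].
Qed.

Variable E : seq G.
Hypothesis E_crossing : crossing_elements `<=` [set` E].

Definition test (i : G * set X) (b : bool) : set X := act i.1 @^-1` side i.2 b.

Definition test_nbr (i : G * set X) : seq (G * set X) :=
  [seq (e * i.1, B) | e <- E, B <- U].

Lemma test_disjoint i : test i false `<=` ~` test i true.
Proof. by move=> z; exact: side_disjoint. Qed.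

Lemma size_test_nbr i : (size (test_nbr i) <= size E * size U)%N.
Proof. by rewrite size_allpairs. Qed.

Lemma test_nbr_independent i j :
  (forall a b, (test i a `&` test j b) !=set0) -> j \in test_nbr i.
Proof.
case: i j => g A [h B] indep; have [z [cAz cBz]] := indep true true.
have cross : crosses act (side A) (side B) (h / g).
  move=> a b; have [w [Aw Bw]] := indep a b.
  by exists (act g w); split => //=; rewrite -act_mul mulgVK.
have /E_crossing hgE : crossing_elements (h / g).
  by exists A; [exact: side_true_In cAz|exists B; [exact: side_true_In cBz|]].
apply/allpairsP; exists (h / g, B); split => //=; last by rewrite mulgVK.
exact/InP/(side_true_In cBz).
Qed.

Definition tests (gs : seq G) : seq (G * set X) :=
  [seq (g, A) | g <- undup gs, A <- undup U].

Lemma uniq_tests gs : uniq (tests gs).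
Proof. by apply: allpairs_uniq; rewrite ?undup_uniq // => -[? ?] [? ?]. Qed.

Lemma size_tests gs : (size (tests gs) <= size gs * size U)%N.
Proof. by rewrite size_allpairs leq_mul ?size_undup. Qed.

Lemma pattern_cell_sub_pullback gs sg g : [set: X] !=set0 -> g \in gs ->
  exists2 A, List.In A (cover_pullback act g U) & pattern_cell test (tests gs) sg `<=` A.
Proof.
move=> [x0 _] ggs.
have g_tests A : List.In A U -> (g, A) \in tests gs.
  by move=> AU; apply: allpairs_f; rewrite mem_undup //; exact/InP.
have [[A AU sgA]|all_true] :=
  pselect (exists2 A, List.In A U & sg (g, A) = false).
  exists (act g @^-1` A); first exact: (List.in_map _ _ _ AU).
  by move=> z /(_ _ (g_tests A AU)); rewrite sgA => /contrapT.
(* The cell is then empty, as the c A cover X; any member of the pullback will do. *)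
have : [set: X] x0 by []; rewrite -c_cover => -[A0 A0U _].
exists (act g @^-1` A0); first exact: (List.in_map _ _ _ A0U).
move=> z cell; have : [set: X] (act g z) by []; rewrite -c_cover => -[A AU cAgz].
case sgA : (sg (g, A)); first by case: (cell _ (g_tests A AU)); rewrite sgA.
by case: all_true; exists A.
Qed.

Lemma Ncov_pullback_join_le gs : [set: X] !=set0 ->
  (0 < Ncov (cover_join [seq cover_pullback act g U | g <- gs])
     <= (size (tests gs)).+1 ^ ((size E * size U).+2 + trunc_log 2 (size (tests gs))))%N.
Proof.
move=> X0.
have [L sizeL coverL] := pattern_cover_of_no_split_tree test_disjoint
  (no_deep_split_tree test_disjoint size_test_nbr test_nbr_independent
     (Z := setT) (uniq_tests gs)).
have subcover : has_subcover_of_size (cover_join [seq cover_pullback act g U | g <- gs])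
    (size [seq pattern_cell test (tests gs) sg | sg <- L]).
  apply: has_subcover_of_refinement => [x|Y /List.in_map_iff [sg [<- _]]].
    have [sg Lsg cell_x] := coverL x I.
    by exists (pattern_cell test (tests gs) sg) => //; exact: (List.in_map _ _ _ Lsg).
  apply: cover_join_refines => V /List.in_map_iff [g [<- ggs]].
  exact/pattern_cell_sub_pullback/InP.
apply/andP; split; first exact: Ncov_gt0 subcover.
by apply: leq_trans (Ncov_le subcover) _; rewrite size_map addSnnS.
Qed.

Lemma Ncov_pullback_seq_bound (s : nat -> G) n : [set: X] !=set0 ->
  let t := trunc_log 2 (size (tests [seq s i | i <- iota 1 n])) in
  let N := Ncov (cover_join [seq cover_pullback act (s i) U | i <- iota 1 n]) in
  [/\ (0 < N)%N, (N <= (size U * n).+1 ^ ((size E * size U).+2 + t))%N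
    & (2 ^ t <= (size U * n).+1)%N].
Proof.
move=> X0 t N.
have size_le : (size (tests [seq s i | i <- iota 1 n]) <= size U * n)%N.
  by rewrite mulnC -[X in (_ <= X * _)%N](size_iota 1 n) -(size_map s) size_tests.
have /andP[N0 Nle] := Ncov_pullback_join_le [seq s i | i <- iota 1 n] X0.
rewrite -map_comp in N0 Nle; split => //.
  by apply: leq_trans Nle _; rewrite leq_exp2r.
rewrite /t; have [->|tests0] := posnP (size (tests [seq s i | i <- iota 1 n])).
  by rewrite trunc_log0.
exact: leq_trans (trunc_logP (isT : (1 < 2)%N) tests0) (leq_trans size_le _).
Qed.
End ConvergenceAction.

Theorem theorem12p2 (R : realType) (G : groupType) (X : topologicalType)
  (act : G -> X -> X) :
  compact [set: X] -> hausdorff_space X ->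
  (exists a b c : X, [/\ a <> b, a <> c & b <> c]) ->
  convergence_action act ->
  null_system R act.
Proof.
move=> X_compact X_hausdorff [x0 _] act_conv U s [U_open U_cover].
have X0 : [set: X] !=set0 by exists x0.
have [c [c_closed_sub c_support]] :=
  closed_shrinking X_hausdorff X_compact open0 U_open (etrans (set0U _) U_cover).
rewrite set0U => c_cover.
have /finite_seqP[E E_crossing] :=
  crossing_elements_finite X_compact act_conv U_open c_closed_sub.
have E_sub : crossing_elements act U c `<=` [set` E] by rewrite E_crossing.
apply: (@limn_esup_ln_div_eq0 R (size U) (size E * size U).+2 _
  (fun n => trunc_log 2 (size (tests U [seq s i | i <- iota 1 n])))) => n;
  by case: (Ncov_pullback_seq_bound act_conv c_closed_sub c_support c_cover
    E_sub s n X0).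
Qed.
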